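(* Let $k\in\{3,4,\dots\}$, let $\mathcal A=(A,\mathrm{cl})\in PG(\mathcal C_k)$ and let $C\subseteq A$ with $C\unlhd_\infty\mathcal A$. Then $C\unlhd_k\mathcal A$.
   Context: A set system is a pair $(A;R)$ where $R$ is a set of finite non-empty subsets of $A$; for $X\subseteq A$, $R[X]=\{r\in R:r\subseteq X\}$ and $\delta(X)=|X|-|R[X]|$. $\mathcal C=\mathcal C_\infty$ is the class of finite set systems with $\delta(X)\ge0$ for all $X\subseteq A$, and $\mathcal C_k$ is the class of members of $\mathcal C$ all of whose sets in $R$ have size at most $k$. $X\le(A;R)$ means $\delta(X)\le\delta(X')$ for all $X\subseteq X'\subseteq A$. For $(A;R)\in\mathcal C$, $d(X)=\min\{\delta(Y):X\subseteq Y\subseteq A\}$, $\mathrm{cl}(X)=\{y:d(X\cup\{y\})=d(X)\}$, and $PG(A;R)=(A,\mathrm{cl})$. A presentation of a matroid $\mathcal A$ is a set system $(A;R)\in\mathcal C$ with $PG(A;R)=\mathcal A$; $PG(\mathcal C_k)$ is the class of matroids having a presentation in $\mathcal C_k$. For $k\in\{3,4,\dots,\infty\}$ and $C\subseteq A$, $C\unlhd_k\mathcal A$ means there is a presentation $(A;R)\in\mathcal C_k$ of $\mathcal A$ with $C\le(A;R)$. *)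

From mathcomp Require Import all_boot all_order all_algebra.
Set Implicit Arguments. Unset Strict Implicit. Unset Printing Implicit Defensive.
Import Order.TTheory GRing.Theory Num.Theory.

(* A set system (A;R): the ground set A is the whole finite type T,
   R : {set {set T}} is a set of (finite) subsets of A. *)
Section SetSystems.
Variable T : finType.

Definition Rof (R : {set {set T}}) (X : {set T}) : {set {set T}} :=
  [set r in R | r \subset X].

Definition delta (R : {set {set T}}) (X : {set T}) : int :=
  (#|X|%:Z - #|Rof R X|%:Z)%R.

(* membership in C = C_infinity: sets of R are non-empty, delta >= 0 *)
Definition inC (R : {set {set T}}) : Prop :=
  set0 \notin R /\ forall X : {set T}, (0 <= delta R X)%R.

(* k : option nat, None standing for infinity. C_k *)
Definition inCk (k : option nat) (R : {set {set T}}) : Prop :=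
  inC R /\ (forall r, r \in R -> if k is Some k' then #|r| <= k' else true).

Definition selfint (R : {set {set T}}) (X : {set T}) : Prop :=
  forall X' : {set T}, X \subset X' -> (delta R X <= delta R X')%R.

(* d(X) = min { delta(Y) : X \subset Y \subset A } (setT is a witness) *)
Definition dR (R : {set {set T}}) (X : {set T}) : int :=
  \big[Order.min/delta R setT]_(Y : {set T} | X \subset Y) delta R Y.

(* cl(X) = { y : d(X u {y}) = d(X) } ; PG(A;R) = (A, clR R) *)
Definition clR (R : {set {set T}}) (X : {set T}) : {set T} :=
  [set y | dR R (y |: X) == dR R X].

Definition presentation (R : {set {set T}}) (cl : {set T} -> {set T}) : Prop :=
  inC R /\ clR R = cl.

Definition inPGCk (k : option nat) (cl : {set T} -> {set T}) : Prop :=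
  exists R, inCk k R /\ clR R = cl.

Definition unlhd (k : option nat) (C : {set T}) (cl : {set T} -> {set T}) : Prop :=
  exists R, inCk k R /\ clR R = cl /\ selfint R C.

End SetSystems.

From mathcomp Require Import all_boot all_order all_algebra zify.
From Stdlib Require Import FunctionalExtensionality.
Set Implicit Arguments. Unset Strict Implicit. Unset Printing Implicit Defensive.
Import Order.TTheory GRing.Theory Num.Theory.

(* Two presentations of the same matroid have the same rank-like function d
   (dR_of_clR), and d determines the closure (clR_of_dR).  Starting from R1 we
   repeatedly shrink a set r of R to r \ x, for a point x chosen so that r \ x
   is not yet in R and x lies in the least self-intersecting superset (hull)
   of r \ x (exists_shrinkable).  Such a shrink squeezes delta between d and
   the old delta, so it keeps d and the self-intersection of C
   (shrink_presentation); as the total size of R drops, we end with a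
   presentation all of whose sets r are tight, |r| <= d(r) + 1
   (tight_presentation).  Finally a tight set has size at most k
   (tight_card_le): comparing the k-bounded presentation with the tight one on
   the flats below the flat spanned by r, an inclusion-exclusion count
   (card_bigcup_morph_eq) shows that r would otherwise be left over. *)

Section UnionOfMeetMorphisms.
Variables (T U : finType) (A B : {set T} -> {set U}).
Hypotheses (AI : {morph A : X Y / X :&: Y}) (BI : {morph B : X Y / X :&: Y}).

(* Removing a member G of Phi: the overlap of A G with the union over the rest
   is again a union of A-values, over the traces G :&: H. *)
Lemma card_bigcup_split (F : {set T} -> {set U}) (G : {set T}) (Phi : {set {set T}}) :
  {morph F : X Y / X :&: Y} -> G \in Phi ->
  #|\bigcup_(H in Phi) F H| + #|\bigcup_(K in [set G :&: H | H in Phi :\ G]) F K|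
    = #|F G| + #|\bigcup_(H in Phi :\ G) F H|.
Proof.
move=> FI GPhi.
have eI : F G :&: \bigcup_(H in Phi :\ G) F H
          = \bigcup_(K in [set G :&: H | H in Phi :\ G]) F K.
  rewrite big_imset_idem; last exact: setUid.
  by rewrite big_distrr; apply: eq_bigr => H _; rewrite FI.
by rewrite (big_setD1 G GPhi) /= -eI cardsUI.
Qed.

Lemma card_bigcup_morph_eq (Phi : {set {set T}}) :
  {in Phi &, forall G H, G :&: H \in Phi} ->
  {in Phi, forall G, #|A G| = #|B G|} ->
  #|\bigcup_(G in Phi) A G| = #|\bigcup_(G in Phi) B G|.
Proof.
have [n] := ubnP #|Phi|; elim: n Phi => // n IH Phi cPhi closed agree.
have [-> | [G0 G0Phi]] := set_0Vmem Phi; first by rewrite !big_set0.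
have [G GPhi Gmax] := arg_maxnP (fun G : {set T} => #|G|) G0Phi.
have {}GPhi : G \in Phi := GPhi.
set Phi' := Phi :\ G; set Psi := [set G :&: H | H in Phi'].
have PhiP' H : H \in Phi' -> H \in Phi by rewrite inE => /andP[].
have PsiPhi K : K \in Psi -> K \in Phi by case/imsetP=> H /PhiP' HPhi ->; apply: closed.
have closed' : {in Phi' &, forall H1 H2, H1 :&: H2 \in Phi'}.
  move=> H1 H2 H1' /PhiP' H2Phi; have H1Phi := PhiP' H1 H1'.
  rewrite in_setD1 closed // andbT; apply: contraTneq H1' => eG.
  have leG : #|H1| <= #|G| := Gmax H1 H1Phi.
  by rewrite in_setD1 negb_and negbK eq_sym eqEcard leG -eG subsetIl.
have closedPsi : {in Psi &, forall K1 K2, K1 :&: K2 \in Psi}.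
  move=> _ _ /imsetP[H1 H1P ->] /imsetP[H2 H2P ->].
  by rewrite setIACA setIid; apply/imset_f/closed'.
have cPhi' : #|Phi'| < n by move: cPhi; rewrite (cardsD1 G Phi) GPhi.
have cPsi : #|Psi| < n := leq_ltn_trans (leq_imset_card _ _) cPhi'.
have e1 := IH _ cPhi' closed' (fun H HP => agree H (PhiP' H HP)).
have e2 := IH _ cPsi closedPsi (fun K KP => agree K (PsiPhi K KP)).
have sA := card_bigcup_split AI GPhi; have sB := card_bigcup_split BI GPhi.
rewrite -/Phi' -/Psi e2 e1 (agree G GPhi) -sB in sA.
exact: addIn sA.
Qed.

End UnionOfMeetMorphisms.

Section SetSystems.
Variable T : finType.
Implicit Types (R P Q : {set {set T}}) (W X Y Z G H F : {set T}) (r q : {set T}).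

Lemma Rof_mono R X Y : X \subset Y -> Rof R X \subset Rof R Y.
Proof.
move=> sXY; apply/subsetP=> q; rewrite !inE => /andP[-> sq].
exact: subset_trans sq sXY.
Qed.

Lemma RofI R X Y : Rof R (X :&: Y) = Rof R X :&: Rof R Y.
Proof. by apply/setP=> q; rewrite !inE subsetI; case: (q \in R). Qed.

Lemma delta_submod R X Y :
  (delta R (X :|: Y) + delta R (X :&: Y) <= delta R X + delta R Y)%R.
Proof.
have hX := cardsUI X Y; have hR := cardsUI (Rof R X) (Rof R Y).
have hU : #|Rof R X :|: Rof R Y| <= #|Rof R (X :|: Y)|.
  by apply/subset_leq_card; rewrite subUset !Rof_mono ?subsetUl ?subsetUr.
rewrite -RofI in hR; rewrite /delta; lia.
Qed.

Lemma delta_add1 R y X : (delta R (y |: X) <= delta R X + 1)%R.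
Proof.
have hX : #|y |: X| <= #|X| + 1 by rewrite cardsU1 addnC leq_add2l leq_b1.
have hR := subset_leq_card (Rof_mono R (subsetUr [set y] X)).
rewrite /delta; lia.
Qed.

Lemma delta_add_completing R r X x :
  r \in R -> x \in r -> x \notin X -> r \subset x |: X ->
  (delta R (x |: X) <= delta R X)%R.
Proof.
move=> rR xr xX rxX.
have rX : r \notin Rof R X.
  by rewrite inE rR; apply/subsetP=> /(_ x xr); apply/negP.
have hR : #|Rof R X| < #|Rof R (x |: X)|.
  have : r |: Rof R X \subset Rof R (x |: X).
    by rewrite subUset sub1set inE rR rxX Rof_mono ?subsetUr.
  by move/subset_leq_card; rewrite cardsU1 rX.
have hX : #|x |: X| = #|X|.+1 by rewrite cardsU1 xX.
rewrite /delta; lia.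
Qed.

Lemma delta_set0 R : inC R -> delta R set0 = 0%R.
Proof.
case=> R0 _; rewrite /delta cards0; suff -> : Rof R set0 = set0 by rewrite cards0.
by apply/setP=> q; rewrite !inE subset0; case: eqP => [-> |]; rewrite ?(negbTE R0) ?andbF.
Qed.

Lemma dR_le R X Z : X \subset Z -> (dR R X <= delta R Z)%R.
Proof. by move=> sXZ; rewrite /dR (bigD1 Z) //= ge_min lexx. Qed.

Lemma dR_attained R X : exists2 Z : {set T}, X \subset Z & dR R X = delta R Z.
Proof.
rewrite /dR; apply: (big_ind (fun v => exists2 Z : {set T}, X \subset Z & v = delta R Z)).
- by exists setT; rewrite ?subsetT.
- by move=> v w [Z1 s1 ->] [Z2 s2 ->]; rewrite minEle; case: ifP => _; [exists Z1 | exists Z2].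
- by move=> Z sXZ; exists Z.
Qed.

Lemma dR_mono R X Y : X \subset Y -> (dR R X <= dR R Y)%R.
Proof. by move=> sXY; have [Z sYZ ->] := dR_attained R Y; apply/dR_le/(subset_trans sXY). Qed.

Lemma dR_ge0 R X : inC R -> (0 <= dR R X)%R.
Proof. by case=> _ h; have [Z _ ->] := dR_attained R X. Qed.

Lemma dR_set0 R : inC R -> dR R set0 = 0%R.
Proof.
by move=> hR; apply/eqP; rewrite eq_le dR_ge0 // -(delta_set0 hR) dR_le ?sub0set.
Qed.

Lemma selfintE R X : selfint R X <-> dR R X = delta R X.
Proof.
split=> [h | e X' sXX']; last by rewrite -e dR_le.
have [Z sXZ e] := dR_attained R X.
by apply/eqP; rewrite eq_le dR_le // e h.
Qed.

Lemma dR_submod R X Y :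
  (dR R (X :|: Y) + dR R (X :&: Y) <= dR R X + dR R Y)%R.
Proof.
have [X' sX ->] := dR_attained R X; have [Y' sY ->] := dR_attained R Y.
apply: le_trans (delta_submod R X' Y').
by apply: lerD; apply: dR_le; [apply: setUSS | apply: setISS].
Qed.

Lemma dR_subadd R X Y : inC R -> (dR R (X :|: Y) <= dR R X + dR R Y)%R.
Proof. by move=> hR; have := dR_submod R X Y; have := dR_ge0 (X :&: Y) hR; lia. Qed.

Lemma selfintI R X Y : selfint R X -> selfint R Y -> selfint R (X :&: Y).
Proof.
move=> hX hY Z sZ.
have h1 := delta_submod R X Z; have h2 := delta_submod R Y (X :&: Z).
have h3 : (delta R X <= delta R (X :|: Z))%R by apply/hX/subsetUl.
have h4 : (delta R Y <= delta R (Y :|: (X :&: Z)))%R by apply/hY/subsetUl.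
have -> : X :&: Y = Y :&: (X :&: Z).
  by rewrite setIA [Y :&: X]setIC (setIidPl sZ).
lia.
Qed.

Lemma selfintT R : selfint R setT.
Proof. by move=> X'; rewrite subTset => /eqP ->. Qed.

Lemma dR_step R y X : dR R (y |: X) = (dR R X + (y \notin clR R X)%:R)%R.
Proof.
rewrite /clR inE; case: eqP => [-> | ne] /=; first by rewrite addr0.
have [Z sXZ eZ] := dR_attained R X.
have h1 : (dR R (y |: X) <= dR R X + 1)%R.
  by rewrite eZ; apply: le_trans (delta_add1 R y Z); apply/dR_le/setUS.
have h2 := dR_mono R (subsetUr [set y] X).
lia.
Qed.

Lemma dR_of_clR P Q : inC P -> inC Q -> clR P = clR Q -> dR P =1 dR Q.
Proof.
move=> hP hQ ecl X; have [n] := ubnP #|X|; elim: n X => // n IH X.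
case: (set_0Vmem X) => [-> _ | [y yX] cX]; first by rewrite !dR_set0.
rewrite -(setD1K yX) !dR_step IH ?ecl //.
by move: cX; rewrite (cardsD1 y X) yX.
Qed.

Lemma clR_of_dR P Q : dR P =1 dR Q -> clR P = clR Q.
Proof.
by move=> e; apply: functional_extensionality => X; apply/setP=> y; rewrite !inE !e.
Qed.

Definition selfintb R X : bool :=
  [forall X' : {set T}, (X \subset X') ==> (delta R X <= delta R X')%R].

Definition hull R X : {set T} := \bigcap_(Y : {set T} | (X \subset Y) && selfintb R Y) Y.

Lemma selfintP R X : reflect (selfint R X) (selfintb R X).
Proof.
apply: (iffP forallP) => h X'; last exact/implyP/h.
by move=> sXX'; move/implyP: (h X'); apply.
Qed.

Lemma sub_hull R X : X \subset hull R X.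
Proof. by apply/bigcapsP=> Y /andP[]. Qed.

Lemma hull_selfint R X : selfint R (hull R X).
Proof.
apply: (big_ind (selfint R)); [exact: selfintT | exact: selfintI |].
by move=> Y /andP[_ /selfintP].
Qed.

Lemma hull_min R X Y : X \subset Y -> selfint R Y -> hull R X \subset Y.
Proof. by move=> sXY /selfintP sY; apply: bigcap_inf; rewrite sXY. Qed.

Lemma selfint_add_completing R r X x :
  r \in R -> x \in r -> x \notin X -> r \subset x |: X ->
  selfint R X -> selfint R (x |: X).
Proof.
move=> rR xr xX rxX sX Z sZ.
apply: le_trans (delta_add_completing rR xr xX rxX) _.
by apply/sX/(subset_trans _ sZ)/subsetUr.
Qed.

Lemma hull_unique_completion R r x q :
  r \in R -> x \in r -> x \notin hull R (r :\ x) ->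
  q \in R -> q \subset hull R r -> x \in q -> q = r.
Proof.
move=> rR xr xY qR qS xq; apply/eqP/negPn/negP => qr.
set S := hull R r; set P := hull R (r :\ x) :&: S.
have sP : selfint R P by apply/selfintI/hull_selfint/hull_selfint.
have xP : x \notin P by rewrite inE negb_and xY.
have rxP : r \subset x |: P.
  rewrite -{1}(setD1K xr) setUS // subsetI sub_hull.
  exact: subset_trans (subsetDl r [set x]) (sub_hull R r).
have cS : #|S| <= #|P|.+1.
  have := subset_leq_card (hull_min rxP (selfint_add_completing rR xr xP rxP sP)).
  by rewrite cardsU1 xP.
have notP (s : {set T}) : x \in s -> s \notin Rof R P.
  by move=> xs; rewrite inE negb_and; apply/orP; right; apply/subsetP=> /(_ x xs); apply/negP.
have cRS : #|Rof R P| + 2 <= #|Rof R S|.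
  have : r |: (q |: Rof R P) \subset Rof R S.
    by rewrite !subUset !sub1set !inE rR qR qS sub_hull Rof_mono ?subsetIr.
  move/subset_leq_card; rewrite !cardsU1 (notP _ xq) in_setU1 negb_or (notP _ xr).
  by rewrite eq_sym qr !add1n addn2.
have := sP S (subsetIr _ _); rewrite /delta; lia.
Qed.

(* A set r of R always has an element x with r \ x not in R: otherwise
   R[r] would have more than |r| members. *)
Lemma exists_missing_minor R r :
  inC R -> r \in R -> exists2 x, x \in r & r :\ x \notin R.
Proof.
case=> _ hR rR.
have [/exists_inP // | /exists_inPn allR] := boolP [exists x in r, r :\ x \notin R].
exfalso.
have inj : {in r &, injective (fun z => r :\ z)}.
  move=> z1 z2 z1r z2r e; apply/eqP/negPn/negP=> ne.
  by have := setD11 z1 r; rewrite e !inE ne z1r.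
have rmin : r \notin [set r :\ z | z in r].
  by apply/imsetP=> -[z zr e]; have := setD11 z r; rewrite -e zr.
have crowded : #|r| < #|Rof R r|.
  have : r |: [set r :\ z | z in r] \subset Rof R r.
    rewrite subUset sub1set !inE rR subxx /=; apply/subsetP=> _ /imsetP[z zr ->].
    by rewrite inE (negPn (allR z zr)) subsetDl.
  by move/subset_leq_card; rewrite cardsU1 rmin card_in_imset.
by have := hR r; rewrite /delta; lia.
Qed.

Lemma tight_of_separated R r :
  inC R -> r \in R -> (forall x, x \in r -> x \notin hull R (r :\ x)) ->
  (#|r|%:Z <= dR R r + 1)%R.
Proof.
move=> hC rR sep; set S := hull R r; have rS : r \subset S := sub_hull R r.
have avoid : Rof R S :\ r \subset Rof R (S :\: r).
  apply/subsetP=> q; rewrite !inE => /and3P[qr qR qS]; rewrite qR /=.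
  apply/subsetP=> z zq; rewrite !inE (subsetP qS) // andbT; apply/negP=> zr.
  by move/eqP: qr; apply; apply: (hull_unique_completion rR zr (sep z zr)).
have cR := subset_leq_card avoid.
have rRS : r \in Rof R S by rewrite inE rR rS.
have eRS : #|Rof R S| = #|Rof R S :\ r|.+1 by rewrite (cardsD1 r) rRS.
have cS : #|S :\: r| + #|r| = #|S|.
  by rewrite cardsD (setIidPr rS) subnK // subset_leq_card.
have hsub := dR_subadd (S :&: r) (S :\: r) hC.
rewrite setID (setIidPr rS) in hsub.
have SS : selfint R S by apply: hull_selfint.
rewrite (proj1 (selfintE R S) SS) in hsub.
have := dR_le R (subxx (S :\: r)); move: hsub; rewrite /delta; lia.
Qed.

Lemma exists_shrinkable R r :
  inC R -> r \in R -> (dR R r + 2 <= #|r|%:Z)%R ->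
  exists2 x, x \in r & (r :\ x \notin R) && (x \in hull R (r :\ x)).
Proof.
move=> hC rR big; have [x0 x0r nx0] := exists_missing_minor hC rR.
have [x0Y | x0Y] := boolP (x0 \in hull R (r :\ x0)); first by exists x0; rewrite ?nx0.
have [y yr yY] : exists2 y, y \in r & y \in hull R (r :\ y).
  have [/exists_inP // | /exists_inPn sep] := boolP [exists y in r, y \in hull R (r :\ y)].
  by have := tight_of_separated hC rR sep; lia.
exists y; rewrite // yY andbT; apply/negP=> ryR.
have x0ry : x0 \in r :\ y.
  by rewrite !inE x0r andbT; apply: contraNneq x0Y => ->.
have := hull_unique_completion rR x0r x0Y ryR.
rewrite (subset_trans (subsetDl r [set y]) (sub_hull R r)) x0ry => /(_ isT isT) e.
by have := setD11 y r; rewrite e yr.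
Qed.

Definition shrink R r x : {set {set T}} := (r :\ x) |: (R :\ r).

Definition weight R : nat := \sum_(q in R) #|q|.

Lemma card_Rof_sum R Y : #|Rof R Y| = \sum_(q in R) (q \subset Y : nat).
Proof.
rewrite -sum1dep_card [RHS]big_mkcond [LHS]big_mkcond /=.
by apply: eq_bigr=> q _; case: (q \in R); case: (q \subset Y).
Qed.

Lemma shrink_weight R r x :
  r \in R -> r :\ x \notin R -> x \in r -> weight (shrink R r x) < weight R.
Proof.
move=> rR nR xr; have nR' : r :\ x \notin R :\ r by rewrite inE negb_and nR orbT.
rewrite /weight big_setU1 //= (big_setD1 r rR) /= ltn_add2r (cardsD1 x r) xr.
by rewrite add1n.
Qed.

Lemma shrink_delta R r x Y :
  r \in R -> r :\ x \notin R ->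
  delta (shrink R r x) Y = (delta R Y + (r \subset Y)%:R - (r :\ x \subset Y)%:R)%R.
Proof.
move=> rR nR; have nR' : r :\ x \notin R :\ r by rewrite inE negb_and nR orbT.
have e : #|Rof (shrink R r x) Y| + (r \subset Y) = (r :\ x \subset Y) + #|Rof R Y|.
  rewrite !card_Rof_sum /shrink big_setU1 //= (big_setD1 r rR) /=.
  by rewrite -addnA [_ + (r \subset Y)]addnC.
rewrite /delta; lia.
Qed.

Lemma dR_squeeze R R' :
  (forall Y, dR R Y <= delta R' Y)%R -> (forall Y, delta R' Y <= delta R Y)%R ->
  dR R' =1 dR R.
Proof.
move=> lo hi X; apply/eqP; rewrite eq_le; apply/andP; split.
- by have [Z sXZ ->] := dR_attained R X; apply: le_trans (hi Z); apply: dR_le.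
- by have [Z sXZ ->] := dR_attained R' X; apply: le_trans (lo Z); apply: dR_mono.
Qed.

Lemma selfint_squeeze R R' X :
  dR R' =1 dR R -> (forall Y, delta R' Y <= delta R Y)%R ->
  selfint R X -> selfint R' X.
Proof.
move=> hd hi /selfintE sX; apply/selfintE/eqP; rewrite eq_le dR_le //=.
by rewrite hd sX hi.
Qed.

Lemma shrink_presentation R r x :
  inC R -> r \in R -> x \in r -> 2 <= #|r| -> r :\ x \notin R ->
  x \in hull R (r :\ x) ->
  [/\ inC (shrink R r x), dR (shrink R r x) =1 dR R &
      forall Y, (delta (shrink R r x) Y <= delta R Y)%R].
Proof.
move=> hC rR xr r2 nR xY.
have hi Y : (delta (shrink R r x) Y <= delta R Y)%R.
  rewrite shrink_delta //; have [rY | //] := boolP (r \subset Y); last by lia.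
  by rewrite (subset_trans (subsetDl r [set x]) rY); lia.
have lo Y : (dR R Y <= delta (shrink R r x) Y)%R.
  rewrite shrink_delta //; have := dR_le R (subxx Y).
  have [rY | nrY] := boolP (r \subset Y).
    by rewrite (subset_trans (subsetDl r [set x]) rY); lia.
  have [sY | ] := boolP (r :\ x \subset Y); last by lia.
  have xY' : x \notin Y.
    by apply: contra nrY => xY'; rewrite -(setD1K xr) subUset sub1set xY' sY.
  have nsY : ~ selfint R Y.
    by move=> sIY; move/negP: xY'; apply; apply: (subsetP (hull_min sY sIY)).
  have : dR R Y != delta R Y by apply: contra_notN nsY => /eqP /selfintE.
  by lia.
have hd := dR_squeeze lo hi; split => //; split.
- rewrite /shrink !inE negb_or; apply/andP; split.
    by apply: contraTneq r2 => e; rewrite (cardsD1 x r) xr -e cards0.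
  by rewrite negb_and; case: hC => -> _; rewrite orbT.
- by move=> X; apply: le_trans (lo X); apply: dR_ge0.
Qed.

Lemma tight_presentation R X :
  inC R -> selfint R X ->
  exists R' : {set {set T}}, [/\ inC R', dR R' =1 dR R, selfint R' X &
    forall r, r \in R' -> (#|r|%:Z <= dR R' r + 1)%R].
Proof.
move=> hC sX; have [n] := ubnP (weight R).
elim: n => // n IH in R hC sX *; rewrite ltnS => wR.
have [/exists_inP[r rR big] | /exists_inPn tight] :=
  boolP [exists r in R, (dR R r + 2 <= #|r|%:Z)%R].
- have [x xr /andP[nR xY]] := exists_shrinkable hC rR big.
  have r2 : 2 <= #|r| by have := dR_ge0 r hC; lia.
  have [hC' hd' hi'] := shrink_presentation hC rR xr r2 nR xY.
  have [R' [hC'' hd'' sX'' tight]] := IH _ hC' (selfint_squeeze hd' hi' sX)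
    (leq_trans (shrink_weight rR nR xr) wR).
  by exists R'; split => // Y; rewrite hd'' hd'.
- by exists R; split => // r rR; have := tight r rR; rewrite -ltNge; lia.
Qed.

Definition flat R G : bool := clR R G \subset G.

Lemma flatP R G y : flat R G -> dR R (y |: G) = dR R G -> y \in G.
Proof. by move=> /subsetP fG e; apply: fG; rewrite inE e. Qed.

(* Every set lies in a flat of the same rank d: take a largest superset of
   the same rank. *)
Lemma flat_closure R X :
  exists G : {set T}, [/\ X \subset G, flat R G & dR R G = dR R X].
Proof.
pose P := [pred G : {set T} | (X \subset G) && (dR R G == dR R X)].
have PX : P X by rewrite /P /= subxx eqxx.
have [G /andP[sXG /eqP eG] Gmax] := arg_maxnP (fun G : {set T} => #|G|) PX.
exists G; split => //; apply/subsetP=> y; rewrite inE => /eqP e.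
have := Gmax (y |: G); rewrite /P /= (subset_trans sXG (subsetUr _ _)) e eG eqxx.
by rewrite cardsU1 => /(_ isT); case: (y \in G); rewrite /= ?add1n ?ltnn.
Qed.

Lemma flat_spans R G W y :
  flat R G -> W \subset G -> dR R (y |: W) = dR R W -> y \in G.
Proof.
move=> fG sWG e; apply: (flatP fG); apply/eqP.
rewrite eq_le (dR_mono R (subsetUr [set y] G)) andbT.
have [yG | yG] := boolP (y \in G).
  by rewrite (setUidPr (_ : [set y] \subset G)) ?sub1set.
have hs := dR_submod R G (y |: W).
have eU : G :|: (y |: W) = y |: G by rewrite setUCA (setUidPl sWG).
have eI : G :&: (y |: W) = W.
  by rewrite setIUr (setIidPr sWG) disjoint_setI0 ?set0U // disjoint_sym disjoints1.
rewrite eU eI e in hs; lia.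
Qed.

Lemma flatI R G H : flat R G -> flat R H -> flat R (G :&: H).
Proof.
move=> fG fH; apply/subsetP=> y; rewrite inE => /eqP e.
by rewrite inE (flat_spans fG (subsetIl G H) e) (flat_spans fH (subsetIr G H) e).
Qed.

Lemma flat_delta R G : flat R G -> delta R G = dR R G.
Proof.
move=> fG; have [Z sGZ eZ] := dR_attained R G.
suff eGZ : G = Z by rewrite eZ eGZ.
apply/eqP; rewrite eqEsubset sGZ; apply/subsetP=> y yZ; apply: (flatP fG).
apply/eqP; rewrite eq_le (dR_mono R (subsetUr [set y] G)) andbT eZ dR_le //.
by rewrite subUset sub1set yZ.
Qed.

Lemma low_flat_of_member R R0 F q :
  dR R0 =1 dR R -> q \in R0 -> q \subset F -> flat R F ->
  exists G, [/\ flat R G, G \subset F, q \subset G & (dR R G < #|q|%:Z)%R].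
Proof.
move=> hd qR0 qF fF; have [G0 [qG0 fG0 eG0]] := flat_closure R q.
exists (G0 :&: F); split; rewrite ?flatI ?subsetIr ?subsetI ?qG0 ?qF //.
have le1 := dR_mono R (subsetIl G0 F); have le2 := dR_le R0 (subxx q).
have inq : 0 < #|Rof R0 q| by apply/card_gt0P; exists q; rewrite inE qR0 subxx.
move: le2; rewrite hd -eG0 /delta; lia.
Qed.

(* Otherwise
   the flats below the flat F spanned by r would account, by
   inclusion-exclusion, for all sets of R0 inside F but not for r. *)
Lemma tight_card_le R R0 k r :
  dR R0 =1 dR R -> (forall q, q \in R0 -> #|q| <= k) ->
  r \in R -> (#|r|%:Z <= dR R r + 1)%R -> #|r| <= k.
Proof.
move=> hd small rR tight; rewrite leqNgt; apply/negP => big.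
have [F [rF fF _]] := flat_closure R r.
have flat0 G : flat R0 G = flat R G by rewrite /flat (clR_of_dR hd).
have agree G : flat R G -> #|Rof R G| = #|Rof R0 G|.
  move=> fG; have := flat_delta fG; rewrite -flat0 in fG.
  by have := flat_delta fG; rewrite hd /delta; lia.
set Phi := [set G : {set T} | [&& G \subset F, flat R G & (dR R G < dR R r)%R]].
have closed : {in Phi &, forall G H, G :&: H \in Phi}.
  move=> G H; rewrite !inE => /and3P[sG fG lG] /and3P[_ fH _].
  rewrite (subset_trans (subsetIl G H) sG) flatI //=.
  exact: le_lt_trans (dR_mono R (subsetIl G H)) lG.
have agreePhi : {in Phi, forall G, #|Rof R G| = #|Rof R0 G|}.
  by move=> G; rewrite inE => /and3P[_ fG _]; apply: agree.
have same := card_bigcup_morph_eq (RofI R) (RofI R0) closed agreePhi.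
have cover : Rof R0 F \subset \bigcup_(G in Phi) Rof R0 G.
  apply/subsetP=> q; rewrite inE => /andP[qR0 qF].
  have [G [fG sGF qG lG]] := low_flat_of_member hd qR0 qF fF.
  apply/bigcupP; exists G; last by rewrite inE qR0 qG.
  by rewrite inE sGF fG /=; have := small q qR0; lia.
have miss : \bigcup_(G in Phi) Rof R G \subset Rof R F :\ r.
  apply/bigcupsP=> G; rewrite !inE => /and3P[sGF _ lG]; apply/subsetP=> q.
  rewrite !inE => /andP[qR qG]; rewrite qR (subset_trans qG sGF) !andbT.
  by apply: contraTneq lG => eq; rewrite -leNgt dR_mono // -eq.
have rRF : r \in Rof R F by rewrite inE rR rF.
have eRF : #|Rof R F| = #|Rof R F :\ r|.+1 by rewrite (cardsD1 r) rRF.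
have c1 := subset_leq_card cover; have c2 := subset_leq_card miss.
rewrite -same -(agree F fF) eRF in c1.
by have := leq_trans c1 c2; rewrite ltnn.
Qed.

End SetSystems.

Theorem mainTheorem12 (T : finType) (k : nat) (cl : {set T} -> {set T}) (C : {set T}) :
  3 <= k ->
  inPGCk (Some k) cl ->
  unlhd None C cl ->
  unlhd (Some k) C cl.
Proof.
move=> _ [R0 [[hC0 small0] ecl0]] [R1 [[hC1 _] [ecl1 sC1]]].
have hd01 : dR R0 =1 dR R1 by apply: dR_of_clR; rewrite ?ecl0 ?ecl1.
have [R [hC hd sC tight]] := tight_presentation hC1 sC1.
exists R; split; first split => // r rR.
- by apply: (tight_card_le _ small0 rR (tight r rR)) => X; rewrite hd01 hd.
- by rewrite (clR_of_dR hd) ecl1.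
Qed.
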